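(* Let $\Omega$ be a topological signature, $X$ a topological space, and $\mathcal B$ a Boolean subalgebra of $\mathcal P(T_\Omega(X))$ satisfying condition $(\ast)$. For $w\in\Omega_n$ and ultrafilters $U_1,\dots,U_n$ of $\mathcal B$, let $w(U_1,\dots,U_n)$ be the set of all $L\in\mathcal B$ for which there are $L_i\in U_i$ ($i=1,\dots,n$) with $w(L_1,\dots,L_n)\subseteq L$ (here $w(L_1,\dots,L_n)=\{w(t_1,\dots,t_n):t_i\in L_i\}$). Then each $w(U_1,\dots,U_n)$ is an ultrafilter of $\mathcal B$, and the evaluation maps $(w,U_1,\dots,U_n)\mapsto w(U_1,\dots,U_n)$ make the Stone dual space $\mathcal B^\star$ a Stone topological $\Omega$-algebra. Moreover, if every $L\in\mathcal B$ is such that $L\cap X$ is open in $X$, then the map $X\to\mathcal B^\star$, $x\mapsto U_x=\{L\in\mathcal B:x\in L\}$, is a generating mapping.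
   Context: $T_\Omega(X)$ is the term algebra on $X$: finite ordered trees with leaves labeled in $X\uplus\Omega_0$ and nodes with $k$ children labeled in $\Omega_k$, topologized as the topological sum over tree shapes of products of label spaces; $X$ is identified with single-node trees; $E_n:\Omega_n\times T_\Omega(X)^n\to T_\Omega(X)$ is its evaluation map. $\mathcal P(S)$ is the Boolean algebra of all subsets of $S$, and $\mathcal P_{co}(S)$ that of clopen subsets of a space $S$. For a Boolean subalgebra $\mathcal B$ of $\mathcal P(T_\Omega(X))$, let $\mathcal B'_n$ be the Boolean subalgebra of $\mathcal P(\Omega_n\times T_\Omega(X)^n)$ generated by all sets $K\times L_1\times\cdots\times L_n$ with $K$ clopen in $\Omega_n$ and $L_i\in\mathcal B$. Condition $(\ast)$: for every $n$ and every $L\in\mathcal B$, $E_n^{-1}(L)\in\mathcal B'_n$. $\mathcal B^\star$ is the set of ultrafilters of $\mathcal B$ with basic open sets $\{U: L\in U\}$, $L\in\mathcal B$. A Stone topological algebra is a compact Hausdorff 0-dimensional space with continuous evaluation maps $\Omega_n\times A^n\to A$. A generating mapping is a continuous map $X\to A$ whose image generates a dense subalgebra of $A$. *)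

From HB Require Import structures.
From mathcomp Require Import all_boot all_order all_algebra.
From mathcomp Require Import all_classical all_reals all_analysis.
Set Implicit Arguments. Unset Strict Implicit. Unset Printing Implicit Defensive.
Import Order.TTheory GRing.Theory Num.Theory.
Local Open Scope classical_set_scope.

(** Term algebra T_Omega(X): finite ordered trees; leaves are variables
    [Var x] or nullary symbols [Node 0 w _]; a node with n children is
    labelled by a symbol of arity n. *)
Inductive term (X : Type) (Om : nat -> Type) : Type :=
| Var : X -> term X Om
| Node : forall n : nat, Om n -> ('I_n -> term X Om) -> term X Om.
Arguments Var {X Om}.
Arguments Node {X Om n}.

Definition Eval {X : Type} {Om : nat -> Type} (n : nat)
  (p : Om n * ('I_n -> term X Om)) : term X Om := Node p.1 p.2.

Definition is_boolalg (S : Type) (B : set (set S)) : Prop :=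
  [/\ B setT, (forall L, B L -> B (~` L)) & (forall L M, B L -> B M -> B (L `|` M))].

Definition gen_boolalg (S : Type) (G : set (set S)) : set (set S) :=
  [set L | forall C, is_boolalg C -> G `<=` C -> C L].

Definition Bprime {X : Type} (Om : nat -> topologicalType)
  (B : set (set (term X Om))) (n : nat) : set (set (Om n * ('I_n -> term X Om))) :=
  gen_boolalg [set P | exists (K : set (Om n)) (Ls : 'I_n -> set (term X Om)),
    [/\ clopen K, (forall i, B (Ls i)) & P = [set p | K p.1 /\ forall i, Ls i (p.2 i)]]].

Definition cond_star {X : Type} (Om : nat -> topologicalType)
  (B : set (set (term X Om))) : Prop :=
  forall n (L : set (term X Om)), B L -> @Bprime X Om B n (@Eval X Om n @^-1` L).

Definition ultrafilter_of (S : Type) (B : set (set S)) (U : set (set S)) : Prop :=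
  [/\ U `<=` B, U setT /\ ~ U set0,
      (forall L M, U L -> B M -> L `<=` M -> U M),
      (forall L M, U L -> U M -> U (L `&` M)) &
      (forall L, B L -> U L \/ U (~` L))].

Definition stone (S : Type) (B : set (set S)) : Type := {U : set (set S) | ultrafilter_of B U}.

HB.instance Definition _ (S : Type) (B : set (set S)) := gen_eqMixin (stone B).
HB.instance Definition _ (S : Type) (B : set (set S)) := gen_choiceMixin (stone B).
(* topology generated by the basic open sets {U | L \in U}, L in B
   (for a Boolean algebra B these sets form a base, closed under finite
   intersections, so the generated topology is the one with that base) *)
HB.instance Definition _ (S : Type) (B : set (set S)) :=
  isSubBaseTopological.Build (stone B) B (fun L => [set U : stone B | proj1_sig U L]).

Definition wU {X : Type} {Om : nat -> Type} (B : set (set (term X Om)))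
  (n : nat) (w : Om n) (Us : 'I_n -> set (set (term X Om))) : set (set (term X Om)) :=
  [set L | B L /\ exists Ls : 'I_n -> set (term X Om), (forall i, Us i (Ls i)) /\
     [set Node w ts | ts in [set ts : 'I_n -> term X Om | forall i, Ls i (ts i)]] `<=` L].

Definition zero_dim (A : topologicalType) : Prop :=
  forall (x : A) (O : set A), open O -> O x -> exists V, [/\ clopen V, V x & V `<=` O].

Definition stone_top_alg (Om : nat -> topologicalType) (A : topologicalType)
  (ev : forall n, Om n * {ptws 'I_n -> A} -> A) : Prop :=
  [/\ compact [set: A], hausdorff_space A, zero_dim A & forall n, continuous (ev n)].

Definition gen_subalg (Om : nat -> topologicalType) (A : topologicalType)
  (ev : forall n, Om n * {ptws 'I_n -> A} -> A) (Y : set A) : set A :=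
  [set a | forall C : set A, Y `<=` C ->
     (forall n (w : Om n) (as_ : 'I_n -> A), (forall i, C (as_ i)) -> C (ev n (w, as_))) ->
     C a].

Definition generating_map (Om : nat -> topologicalType) (X A : topologicalType)
  (ev : forall n, Om n * {ptws 'I_n -> A} -> A) (f : X -> A) : Prop :=
  continuous f /\ dense (gen_subalg ev (range f)).

From HB Require Import structures.
From mathcomp Require Import all_boot all_order all_algebra.
From mathcomp Require Import all_classical all_reals all_analysis.
From mathcomp Require Import finmap.
Local Open Scope classical_set_scope.
Set Implicit Arguments. Unset Strict Implicit. Unset Printing Implicit Defensive.

(** A set [L] of [B] lies in [w(U_1,...,U_n)] exactly when [E_n^-1(L)] lies in
    the product filter of the clopen neighbourhoods of [w] and of the [U_i].
    By condition (star), [E_n^-1(L)] belongs to the Boolean algebra [B'_n] generated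
    by boxes, and on boxes this product filter decides every set: a box either
    contains [w] and has all its sides in the [U_i], or its complement contains
    a box of the filter.  Hence [w(U_1,...,U_n)] is an ultrafilter, and the same
    description shows that [(w, U_1, ..., U_n) |-> w(U_1,...,U_n)] is continuous
    for the basic clopen sets of the Stone space.  Principal ultrafilters commute
    with the operations, so every principal ultrafilter lies in the subalgebra
    generated by those of the variables; principal ultrafilters are dense since
    every nonempty basic set contains one. *)

Section FiniteIntersections.
Variables (S : Type) (F : set (set S)).
Hypotheses (FT : F setT) (FI : forall L M, F L -> F M -> F (L `&` M)).

Lemma bigcap_fset_closed (I : choiceType) (f : I -> set S) (D : {fset I}) :
  (forall i, i \in D -> F (f i)) -> F (\bigcap_(i in [set` D]) f i).
Proof. by move=> DF; rewrite bigcap_fset big_seq; apply: big_ind. Qed.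

End FiniteIntersections.

Section BooleanAlgebra.
Variables (S : Type) (B : set (set S)).
Hypothesis HB : is_boolalg B.

Lemma boolalgT : B setT. Proof. by case: HB. Qed.
Lemma boolalgC L : B L -> B (~` L). Proof. by case: HB => _ + _; apply. Qed.
Lemma boolalgU L M : B L -> B M -> B (L `|` M). Proof. by case: HB => _ _; apply. Qed.

Lemma boolalgI L M : B L -> B M -> B (L `&` M).
Proof.
by move=> BL BM; rewrite -[L `&` M]setCK setCI; apply/boolalgC/boolalgU; apply: boolalgC.
Qed.

Section Ultrafilter.
Variable u : set (set S).
Hypothesis hu : ultrafilter_of B u.

Lemma ufB L : u L -> B L. Proof. by case: hu => + _ _ _ _; apply. Qed.
Lemma ufT : u setT. Proof. by case: hu => _ []. Qed.
Lemma uf_neq0 : ~ u set0. Proof. by case: hu => _ []. Qed.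
Lemma ufS L M : u L -> B M -> L `<=` M -> u M. Proof. by case: hu => _ _ + _ _; apply. Qed.
Lemma ufI L M : u L -> u M -> u (L `&` M). Proof. by case: hu => _ _ _ + _; apply. Qed.
Lemma ufVC L : B L -> u L \/ u (~` L). Proof. by case: hu => _ _ _ _; apply. Qed.

Lemma uf_nonempty L : u L -> L !=set0.
Proof. by move=> uL; apply/set0P/eqP => L0; apply: uf_neq0; rewrite -L0. Qed.

Lemma uf_notC L : u L -> ~ u (~` L).
Proof. by move=> uL uLC; apply: uf_neq0; rewrite -(setICr L); apply: ufI. Qed.

Lemma ufC L : B L -> ~ u L -> u (~` L).
Proof. by move=> BL nuL; case: (ufVC BL). Qed.

End Ultrafilter.

Lemma uf_subset_eq u v : ultrafilter_of B u -> ultrafilter_of B v ->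
  u `<=` v -> u = v.
Proof.
move=> hu hv uv; apply/seteqP; split=> // L vL; apply: contrapT => nuL.
exact: (uf_notC hv vL (uv _ (ufC hu (ufB hv vL) nuL))).
Qed.

Definition uf_at (t : S) : set (set S) := [set L | B L /\ L t].

Lemma uf_at_ultra t : ultrafilter_of B (uf_at t).
Proof.
split=> [L []//|||L M [BL Lt] [BM Mt]|L BL].
- by split; [split=> //; exact: boolalgT|case].
- by move=> L M [_ Lt] BM /(_ t Lt).
- by split; [exact: boolalgI|].
- by have [Lt|nLt] := pselect (L t); [left|right; split=> //; exact: boolalgC].
Qed.

Definition stone_basic (L : set S) : set (stone B) := [set U | sval U L].

Definition stone_at (t : S) : stone B := exist _ (uf_at t) (uf_at_ultra t).

Lemma stone_val_inj (U V : stone B) : sval U = sval V -> U = V.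
Proof. by case: U V => [U hU] [V hV] /= UV; apply: eq_exist. Qed.

Lemma stone_basic_bigcap (E : {fset set S}) : (forall L, L \in E -> B L) ->
  \bigcap_(L in [set` E]) stone_basic L = stone_basic (\bigcap_(L in [set` E]) L).
Proof.
move=> EB; apply/seteqP; split=> U /= EU.
  exact: bigcap_fset_closed (ufT (svalP U)) (ufI (svalP U)) _ _ _ EU.
by move=> L LE; apply: (ufS (svalP U) EU (EB L LE)) => t /(_ L LE).
Qed.

Lemma nbhs_stoneP (U : stone B) (A : set (stone B)) :
  nbhs U A <-> exists L, [/\ B L, sval U L & stone_basic L `<=` A].
Proof.
split=> [|[L [BL UL LA]]].
  case=> O [[D DO <-] [i Di Ui] OA].
  have [E EB Ei] := DO i Di.
  have {}EB L : L \in E -> B L by move/EB/set_mem.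
  have {}Ei : i = stone_basic (\bigcap_(L in [set` E]) L).
    by rewrite -Ei -(stone_basic_bigcap EB).
  exists (\bigcap_(L in [set` E]) L); split.
  - exact: bigcap_fset_closed boolalgT boolalgI _ _ _ EB.
  - by rewrite Ei in Ui.
  - by rewrite -Ei => V iV; apply: OA; exists i.
exists (stone_basic L); split=> //.
exists [set stone_basic L]; last by rewrite bigcup_set1.
by move=> _ ->; exact: finI_from1.
Qed.

Lemma open_stone_basic L : B L -> open (stone_basic L).
Proof.
by move=> BL; rewrite openE => U UL; rewrite /interior; apply/nbhs_stoneP; exists L; split.
Qed.

Lemma stone_basicC L : B L -> stone_basic (~` L) = ~` stone_basic L.
Proof.
move=> BL; apply/seteqP; split=> U /=; last exact: (ufC (svalP U) BL).
by move=> ULC UL; exact: (uf_notC (svalP U) UL ULC).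
Qed.

Lemma clopen_stone_basic L : B L -> clopen (stone_basic L).
Proof.
move=> BL; split; first exact: open_stone_basic.
by rewrite -[stone_basic L]setCK -stone_basicC //; apply/open_closedC/open_stone_basic/boolalgC.
Qed.

Lemma stone_zero_dim : zero_dim (stone B).
Proof.
move=> U O /[swap] OU; rewrite openE => /(_ U OU) /nbhs_stoneP [L [BL UL LO]].
by exists (stone_basic L); split=> //; exact: clopen_stone_basic.
Qed.

Lemma stone_hausdorff : hausdorff_space (stone B).
Proof.
rewrite open_hausdorff => U V /eqP UV.
have [L UL nVL] : exists2 L, sval U L & ~ sval V L.
  apply: contrapT => nsep; apply/UV/stone_val_inj/uf_subset_eq; try exact: svalP.
  by move=> L UL; apply: contrapT => nVL; apply: nsep; exists L.
have BL := ufB (svalP U) UL.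
exists (stone_basic L, stone_basic (~` L)).
- by rewrite !in_setE; split=> //=; exact: (ufC (svalP V) BL nVL).
- split; [exact: open_stone_basic|exact/open_stone_basic/boolalgC|].
  by rewrite stone_basicC // setICr.
Qed.

Lemma stone_compact : compact [set: stone B].
Proof.
rewrite compact_ultra => G G_ultra _.
pose lim := [set L | B L /\ G (stone_basic L)].
have lim_ultra : ultrafilter_of B lim.
  split=> [L []//|||L M [BL GL] [BM GM]|L BL].
  - split.
      split; first exact: boolalgT.
      by apply: filterS filterT => U _; exact: (ufT (svalP U)).
    case=> _ G0; apply: (@filter_not_empty _ G _).
    by apply: filterS G0 => U /(uf_neq0 (svalP U)).
  - move=> L M [_ GL] BM LM; split=> //.
    by apply: filterS GL => U UL; exact: (ufS (svalP U) UL BM LM).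
  - split; first exact: boolalgI.
    by apply: filterS (filterI GL GM) => U [UL UM]; exact: (ufI (svalP U) UL UM).
  - have [GL|GLC] := in_ultra_setVsetC (stone_basic L) G_ultra; first by left.
    by right; split; [exact: boolalgC|rewrite stone_basicC].
exists (exist _ lim lim_ultra); split=> // A /nbhs_stoneP [L [_ [_ GL] LA]].
exact: filterS LA GL.
Qed.

Lemma dense_range_stone_at : dense (range stone_at).
Proof.
move=> O [U OU]; rewrite openE => /(_ U OU) /nbhs_stoneP [L [BL UL LO]].
have [t Lt] := uf_nonempty (svalP U) UL.
by exists (stone_at t); split; [exact: LO|exists t].
Qed.

Lemma continuous_stone_at_comp (Y : topologicalType) (f : Y -> S) :
  (forall L, B L -> open (f @^-1` L)) -> continuous (stone_at \o f).
Proof.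
move=> fB y A /nbhs_stoneP [L [BL [_ Lfy] LA]].
apply: (filterS (P := f @^-1` L)) => [z Lfz|]; first by apply: LA.
by apply: open_nbhs_nbhs; split=> //; exact: fB.
Qed.

End BooleanAlgebra.

Lemma dense_subset (T : topologicalType) (A D : set T) :
  A `<=` D -> dense A -> dense D.
Proof.
move=> AD dA O O0 oO; have [x [Ox Ax]] := dA O O0 oO.
by exists x; split; [|exact: AD].
Qed.

Section TermAlgebra.
Variables (Om : nat -> topologicalType) (X : Type) (B : set (set (term X Om))).
Hypothesis HB : is_boolalg B.

Local Notation T := (term X Om).

Definition box n (K : set (Om n)) (Ls : 'I_n -> set T) : set (Om n * ('I_n -> T)) :=
  [set p | K p.1 /\ forall i, Ls i (p.2 i)].

Definition box_filter n (w : Om n) (Us : 'I_n -> set (set T)) :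
    set (set (Om n * ('I_n -> T))) :=
  [set P | exists K Ls, [/\ clopen K, K w, (forall i, Us i (Ls i)) & box K Ls `<=` P]].

Section BoxFilter.
Variables (n : nat) (w : Om n) (Us : 'I_n -> set (set T)).
Hypothesis hUs : forall i, ultrafilter_of B (Us i).

Lemma uf_family_point (Ls : 'I_n -> set T) : (forall i, Us i (Ls i)) ->
  exists ts : 'I_n -> T, forall i, Ls i (ts i).
Proof.
move=> UL; have [ts tsL] := @boolp.choice _ _ Ls (fun i => uf_nonempty (hUs i) (UL i)).
by exists ts.
Qed.

Lemma box_filterT : box_filter w Us setT.
Proof. by exists setT, (fun=> setT); split=> // [|i]; [exact: clopenT|exact: (ufT (hUs i))]. Qed.

Lemma box_filterS P Q : box_filter w Us P -> P `<=` Q -> box_filter w Us Q.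
Proof. by case=> K [Ls [cK Kw UL KP]] PQ; exists K, Ls; split=> //; exact: subset_trans PQ. Qed.

Lemma box_filterI P Q :
  box_filter w Us P -> box_filter w Us Q -> box_filter w Us (P `&` Q).
Proof.
case=> K [Ls [cK Kw UL KP]] [K' [Ls' [cK' K'w UL' KQ]]].
exists (K `&` K'), (fun i => Ls i `&` Ls' i); split.
- exact: clopenI.
- by [].
- by move=> i; exact: (ufI (hUs i) (UL i) (UL' i)).
- move=> p [[pK pK'] pL]; split; [apply: KP|apply: KQ]; split=> // i; by case: (pL i).
Qed.

(* The sets decided by [box_filter w Us] form a Boolean algebra, so it suffices
   to decide the boxes that generate [B'_n]. *)
Lemma box_filterVC P : Bprime B P -> box_filter w Us P \/ box_filter w Us (~` P).
Proof.
move/(_ [set P | box_filter w Us P \/ box_filter w Us (~` P)]); apply; first split.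
- by left; exact: box_filterT.
- by move=> Q [FQ|FQC]; [right; rewrite setCK|left].
- move=> Q R [FQ|FQC] [FR|FRC].
  + by left; apply: box_filterS FQ _; exact: subsetUl.
  + by left; apply: box_filterS FQ _; exact: subsetUl.
  + by left; apply: box_filterS FR _; exact: subsetUr.
  + by right; rewrite setCU; exact: box_filterI.
move=> _ [K [Ls [cK BL ->]]].
have [Kw|nKw] := pselect (K w); last first.
  right; exists (~` K), (fun=> setT); split=> //.
  - exact: clopenC.
  - by move=> i; exact: (ufT (hUs i)).
  - by move=> p [pK _] [].
have [UL|] := pselect (forall i, Us i (Ls i)); first by left; exists K, Ls; split.
move=> /existsNP [j nULj]; right.
exists setT, (fun i => if i == j then ~` Ls j else setT); split=> //.
- exact: clopenT.
- move=> i; case: eqP => [->|_]; last exact: (ufT (hUs i)).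
  exact: (ufC (hUs j) (BL j) nULj).
- by move=> p [_ pL] [_ /(_ j)]; have := pL j; rewrite eqxx.
Qed.

End BoxFilter.

Section Operations.
Hypothesis Hs : cond_star B.

Lemma wU_box_filter n (w : Om n) (Us : 'I_n -> set (set T)) :
  (forall i, ultrafilter_of B (Us i)) ->
  forall L, B L -> wU B w Us L <-> box_filter w Us (@Eval X Om n @^-1` L).
Proof.
move=> hUs L BL; split=> [[_ [Ls [UL wLs]]]|[K [Ls [_ Kw UL KL]]]]; last first.
  by split=> //; exists Ls; split=> // _ [ts tsL <-]; apply: (KL (w, ts)).
have [//|[K [Ls' [_ Kw UL' KLC]]]] := box_filterVC w hUs (Hs BL).
have [ts tsLL'] := uf_family_point hUs (fun i => ufI (hUs i) (UL i) (UL' i)).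
have Lwts : L (Node w ts) by apply: wLs; exists ts => // i; case: (tsLL' i).
have wts : box K Ls' (w, ts) by split=> // i; case: (tsLL' i).
by move/KLC: wts.
Qed.

Lemma wU_ultra n (w : Om n) (Us : 'I_n -> set (set T)) :
  (forall i, ultrafilter_of B (Us i)) -> ultrafilter_of B (wU B w Us).
Proof.
move=> hUs; have wUE := wU_box_filter w hUs.
split=> [L []//|||L M wL wM|L BL].
- split; first by apply/(wUE _ (boolalgT HB)); exact: box_filterT.
  case=> _ [Ls [UL wLs]]; have [ts tsL] := uf_family_point hUs UL.
  by apply: (wLs (Node w ts)); exists ts.
- move=> L M [_ [Ls [UL wLs]]] BM LM; split=> //; exists Ls; split=> //.
  exact: subset_trans LM.
- have [[BL _] [BM _]] := (wL, wM).
  apply/(wUE _ (boolalgI HB BL BM)); rewrite preimage_setI.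
  by apply: (box_filterI hUs); [apply/(wUE _ BL)|apply/(wUE _ BM)].
- rewrite (propext (wUE _ BL)) (propext (wUE _ (boolalgC HB BL))) preimage_setC.
  exact: (box_filterVC w hUs (Hs BL)).
Qed.

Lemma wU_uf_at n (w : Om n) (ts : 'I_n -> T) :
  wU B w (fun i => uf_at B (ts i)) = uf_at B (Node w ts).
Proof.
apply: uf_subset_eq; [exact: wU_ultra (fun i => uf_at_ultra HB (ts i))|exact: uf_at_ultra|].
by move=> L [BL [Ls [tsL wLs]]]; split=> //; apply: wLs; exists ts => // i; case: (tsL i).
Qed.

Definition stone_eval n (p : Om n * {ptws 'I_n -> stone B}) : stone B :=
  exist _ (wU B p.1 (fun i => sval (p.2 i))) (wU_ultra p.1 (fun i => svalP (p.2 i))).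

Lemma stone_eval_continuous n : continuous (@stone_eval n).
Proof.
move=> [w Us] A /(nbhs_stoneP HB) [L [BL wL LA]].
have hUs i := svalP (Us i).
have [K [Ls [cK Kw UL KL]]] := (wU_box_filter w hUs BL).1 wL.
pose N := [set Vs : {ptws 'I_n -> stone B} | forall i, sval (Vs i) (Ls i)].
apply: (filterS (P := [set q | K q.1 /\ N q.2])).
  move=> [w' Vs] [/= Kw' NVs]; apply: LA; rewrite /stone_basic /=.
  by apply/(wU_box_filter w' (fun i => svalP (Vs i)) BL); exists K, Ls; split.
exists (K, N); last by move=> q [].
split; first by apply: open_nbhs_nbhs; split=> //; case: cK.
apply: (@filter_forall _ _ (fun i (Vs : {ptws 'I_n -> stone B}) => sval (Vs i) (Ls i))
  (nbhs Us)) => i.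
have UsLs : nbhs (Us i) (stone_basic (Ls i)).
  by apply/(nbhs_stoneP HB); exists (Ls i); split=> //; exact: (ufB (hUs i) (UL i)).
exact: (@proj_continuous _ (fun=> stone B) i Us _ UsLs).
Qed.

Lemma stone_eval_at n (w : Om n) (ts : 'I_n -> T) :
  stone_eval (w, stone_at HB \o ts) = stone_at HB (Node w ts).
Proof. by apply: stone_val_inj; exact: wU_uf_at. Qed.

Lemma gen_subalg_stone_at t :
  gen_subalg stone_eval (range (stone_at HB \o Var)) (stone_at HB t).
Proof.
elim: t => [x|n w ts IH] C VC evalC; first by apply: VC; exists x.
by rewrite -stone_eval_at; apply: (evalC) => i; exact: (IH i C VC evalC).
Qed.

End Operations.

End TermAlgebra.

Theorem theorem5p5 (Om : nat -> topologicalType) (X : topologicalType)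
  (B : set (set (term X Om))) :
  is_boolalg B -> cond_star B ->
  (forall n (w : Om n) (Us : 'I_n -> stone B),
      ultrafilter_of B (wU B w (fun i => proj1_sig (Us i)))) /\
  exists ev : forall n, Om n * {ptws 'I_n -> stone B} -> stone B,
    (forall n (w : Om n) (Us : 'I_n -> stone B),
        proj1_sig (ev n (w, Us)) = wU B w (fun i => proj1_sig (Us i))) /\
    stone_top_alg ev /\
    ((forall L, B L -> open (@Var X Om @^-1` L)) ->
     exists f : X -> stone B,
       (forall x, proj1_sig (f x) = [set L | B L /\ L (Var x)]) /\
       generating_map ev f).
Proof.
move=> HB Hs; split=> [n w Us|].
  exact: (wU_ultra HB Hs w (fun i => svalP (Us i))).
exists (stone_eval HB Hs); split=> //; split.
  split; [exact: stone_compact|exact: stone_hausdorff|exact: stone_zero_dim|].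
  exact: stone_eval_continuous.
move=> VarB; exists (stone_at HB \o Var); split=> //; split.
  exact: continuous_stone_at_comp.
apply: dense_subset (dense_range_stone_at HB) => _ [t _ <-].
exact: gen_subalg_stone_at.
Qed.
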